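(* Let $\Lambda_\infty=(r_0=0,r_1,r_2,\dots)$ be strictly increasing with $\lim_{n\to\infty}r_n=\infty$ and $\sum_{i=1}^\infty 1/r_i<\infty$. Let $0<a<1$, $n\ge1$, and let $P\in E(\Lambda_n)$ be $\mathbb{R}^s$-valued with $P'(a)\neq 0$. Then there is a constant $c>0$ depending only on $\Lambda_\infty$ and $a$ such that for all $m\ge n$, $$\bigl\|\eta_0(P,\Lambda_m,[a,1])-\eta_1(P,\Lambda_m,[a,1])\bigr\|_\infty\ \ge\ \frac{\|P'(a)\|_\infty}{c}>0 .$$
   Context: For a sequence $0=r_0<r_1<r_2<\cdots$ of reals, write $\Lambda_n=(r_0,\dots,r_n)$ and $E(\Lambda_n)=\mathrm{span}(t^{r_0}=1,t^{r_1},\dots,t^{r_n})$ (functions on $]0,\infty[$); an $\mathbb{R}^s$-valued element of $E(\Lambda_n)$ is a map $t\mapsto\sum_{k=0}^n t^{r_k}A_k$ with $A_k\in\mathbb{R}^s$. For an interval $[a,b]$ with $0<a<b$, the Chebyshev–Bernstein basis $(B^n_{0,\Lambda_n},\dots,B^n_{n,\Lambda_n})$ of $E(\Lambda_n)$ over $[a,b]$ is the unique basis of $E(\Lambda_n)$ with $\sum_{k=0}^n B^n_{k,\Lambda_n}\equiv 1$ such that, for each $k$, $B^n_{k,\Lambda_n}$ has a zero of multiplicity (exactly) $k$ at $a$ and of multiplicity $n-k$ at $b$. For $P\in E(\Lambda_n)$ and $m\ge n$, the control points $\eta_i(P,\Lambda_m,[a,b])\in\mathbb{R}^s$, $i=0,\dots,m$,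 are defined by $P(t)=\sum_{i=0}^m B^m_{i,\Lambda_m}(t)\,\eta_i(P,\Lambda_m,[a,b])$. *)

From Stdlib Require Import Reals Lra Lia.
Open Scope R_scope.

(* A generic element of E(Lambda_n) with real coefficients c 0, ..., c n:
   t |-> sum_{k=0}^n c_k t^{r_k}  (t > 0, t^x := Rpower t x). *)
Definition Efun (r : nat -> R) (n : nat) (c : nat -> R) (t : R) : R :=
  sum_f_R0 (fun k => c k * Rpower t (r k)) n.

Fixpoint has_nth_deriv (k : nat) (f g : R -> R) : Prop :=
  match k with
  | O => forall t, 0 < t -> f t = g t
  | S k' => exists h : R -> R,
      (forall t, 0 < t -> derivable_pt_lim f t (h t)) /\ has_nth_deriv k' h g
  end.

Definition zero_of_mult (f : R -> R) (x : R) (k : nat) : Prop :=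
  (forall j, (j <= k)%nat -> exists g, has_nth_deriv j f g) /\
  (forall j g, (j < k)%nat -> has_nth_deriv j f g -> g x = 0) /\
  (forall g, has_nth_deriv k f g -> g x <> 0).

Definition CB_basis (r : nat -> R) (m : nat) (a b : R) (B : nat -> R -> R) : Prop :=
  (forall k, (k <= m)%nat -> exists c : nat -> R, forall t, 0 < t -> B k t = Efun r m c t) /\
  (forall lam : nat -> R,
      (forall t, 0 < t -> sum_f_R0 (fun k => lam k * B k t) m = 0) ->
      forall k, (k <= m)%nat -> lam k = 0) /\
  (forall t, 0 < t -> sum_f_R0 (fun k => B k t) m = 1) /\
  (forall k, (k <= m)%nat -> zero_of_mult (B k) a k /\ zero_of_mult (B k) b (m - k)).

Fixpoint norm_inf (s : nat) (v : nat -> R) : R :=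
  match s with
  | O => 0
  | S s' => Rmax (norm_inf s' v) (Rabs (v s'))
  end.

(* Write P = sum_k B_k eta_k in the Chebyshev-Bernstein basis of E(Lambda_m)
   over [a, 1].  As B_k has a zero of order k at a, only B_0 and B_1 contribute
   to P'(a), and B_0'(a) + B_1'(a) = 0 by the partition of unity; hence
   P'(a) = B_0'(a) (eta_0 - eta_1) and it suffices to bound |B_0'(a)| uniformly
   in m.  Since B_0 has an m-fold zero at 1, its coefficients kill every
   polynomial of degree < m evaluated at the exponents r_0, ..., r_m; this fixes
   them up to a factor, so B_0 = phi_m / phi_m(a) for explicit normalized
   weights, and B_0'(a) = (theta phi_m)(a) / (a phi_m(a)) with theta = t d/dt.
   The phi_m satisfy (1 - theta / r_{m+1}) phi_{m+1} = phi_m, phi_{m+1}(1) = 0,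
   and a maximum principle for 1 - theta / R yields -r_1 <= theta phi_m <= 0 on
   ]0, 1] and, by comparison with barriers 1 - d + beta t^s whose coefficient
   grows like prod (1 - s / r_i)^{-1}, the bound phi_m(a) >= d > 0 uniformly
   in m as soon as sum 1/r_i < oo.  The constant is c = r_1 / (a d). *)

From Stdlib Require Import Reals Lra Lia.
Open Scope R_scope.

Lemma finite_choice {A : Type} (P : nat -> A -> Prop) (n : nat) :
  (forall k, (k <= n)%nat -> exists x, P k x) ->
  exists f : nat -> A, forall k, (k <= n)%nat -> P k (f k).
Proof.
  induction n as [|n IH]; intros H.
  - destruct (H 0%nat (le_n 0)) as [x Hx].
    exists (fun _ => x). intros k Hk. replace k with 0%nat by lia. exact Hx.
  - destruct IH as [f Hf]; [intros k Hk; apply H; lia|].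
    destruct (H (S n) (le_n _)) as [x Hx].
    exists (fun k => if (k <=? n)%nat then f k else x). intros k Hk.
    destruct (Nat.leb_spec k n); [apply Hf; lia | now replace k with (S n) by lia].
Qed.

Lemma sum_scal (c : R) (f : nat -> R) (n : nat) :
  sum_f_R0 (fun k => c * f k) n = c * sum_f_R0 f n.
Proof. induction n as [|n IH]; simpl; [|rewrite IH]; ring. Qed.

Lemma sum_single (f : nat -> R) (n k : nat) : (k <= n)%nat ->
  (forall i, (i <= n)%nat -> i <> k -> f i = 0) -> sum_f_R0 f n = f k.
Proof.
  induction n as [|n IH]; intros Hk H.
  - now replace k with 0%nat by lia.
  - simpl. destruct (Nat.eq_dec k (S n)) as [->|Hne].
    + rewrite (sum_eq _ (fun _ => 0)), sum_cte by (intros; apply H; lia). ring.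
    + rewrite IH, (H (S n)) by (lia || (intros; apply H; lia)). ring.
Qed.

Lemma sum_first_two (f : nat -> R) (n : nat) : (1 <= n)%nat ->
  (forall k, (2 <= k <= n)%nat -> f k = 0) -> sum_f_R0 f n = f 0%nat + f 1%nat.
Proof.
  induction n as [|[|n] IH]; intros Hn H; try lia; [reflexivity|].
  change (sum_f_R0 f (S (S n))) with (sum_f_R0 f (S n) + f (S (S n))).
  rewrite IH, (H (S (S n))) by (lia || (intros; apply H; lia)). ring.
Qed.

(* Falling factorial x (x-1) ... (x-j+1): the j-th derivative of t^x at t = 1. *)
Fixpoint fall (j : nat) (x : R) : R :=
  match j with O => 1 | S j' => fall j' x * (x - INR j') end.

(* [poly_lt m p]: p is a real polynomial of degree < m, written in the basis
   fall 0, ..., fall (m-1). *)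
Fixpoint poly_lt (m : nat) (p : R -> R) : Prop :=
  match m with
  | O => forall x, p x = 0
  | S m' => exists q b, poly_lt m' q /\ forall x, p x = q x + b * fall m' x
  end.

Lemma poly_lt_ext m p p' : poly_lt m p -> (forall x, p x = p' x) -> poly_lt m p'.
Proof.
  destruct m as [|m]; simpl.
  - intros H E x. rewrite <- E. apply H.
  - intros [q [b [Hq E1]]] E. exists q, b. split; [exact Hq|]. intro x. rewrite <- E. apply E1.
Qed.

Lemma poly_lt_zero m : poly_lt m (fun _ => 0).
Proof. induction m; simpl; auto. exists (fun _ => 0), 0. split; auto. intros; ring. Qed.

Lemma poly_lt_S m p : poly_lt m p -> poly_lt (S m) p.
Proof. intro H. exists p, 0. split; auto. intros; ring. Qed.

Lemma poly_lt_le m m' p : (m <= m')%nat -> poly_lt m p -> poly_lt m' p.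
Proof. induction 1; auto using poly_lt_S. Qed.

Lemma poly_lt_plus m p q : poly_lt m p -> poly_lt m q -> poly_lt m (fun x => p x + q x).
Proof.
  revert p q; induction m; simpl; intros p q Hp Hq.
  - intros x. rewrite Hp, Hq; ring.
  - destruct Hp as [p1 [b1 [H1 E1]]], Hq as [q1 [b2 [H2 E2]]].
    exists (fun x => p1 x + q1 x), (b1 + b2). split; auto.
    intro x. rewrite E1, E2. ring.
Qed.

Lemma poly_lt_scal m p c : poly_lt m p -> poly_lt m (fun x => c * p x).
Proof.
  revert p; induction m; simpl; intros p Hp.
  - intros x. rewrite Hp; ring.
  - destruct Hp as [p1 [b1 [H1 E1]]].
    exists (fun x => c * p1 x), (c * b1). split; auto. intro x. rewrite E1. ring.
Qed.

Lemma poly_lt_fall j : poly_lt (S j) (fall j).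
Proof. exists (fun _ => 0), 1. split; [apply poly_lt_zero | intros; ring]. Qed.

Lemma poly_lt_const b : poly_lt 1 (fun _ => b).
Proof. exists (fun _ => 0), b. split; [intro; reflexivity | intros; simpl; ring]. Qed.

(* Multiplication by x raises the degree by one, since x fall j = fall (j+1) + j fall j. *)
Lemma poly_lt_mulX m q : poly_lt m q -> poly_lt (S m) (fun x => x * q x).
Proof.
  revert q; induction m as [|m IH]; intros q Hq.
  - apply poly_lt_ext with (fun _ => 0); [apply poly_lt_zero|].
    intro x. simpl in Hq. rewrite Hq. ring.
  - destruct Hq as [q1 [b [H1 E1]]].
    apply poly_lt_ext with
      (fun x => x * q1 x + b * (fall (S m) x + INR m * fall m x)).
    + apply poly_lt_plus; [apply poly_lt_S, IH, H1|].
      apply poly_lt_scal, poly_lt_plus; [apply poly_lt_fall|].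
      apply poly_lt_scal, poly_lt_S, poly_lt_fall.
    + intro x. rewrite E1. simpl. ring.
Qed.

Lemma poly_lt_lin m q c : poly_lt m q -> poly_lt (S m) (fun x => (x - c) * q x).
Proof.
  intro H. apply poly_lt_ext with (fun x => x * q x + (- c) * q x).
  - apply poly_lt_plus; [apply poly_lt_mulX, H | apply poly_lt_S, poly_lt_scal, H].
  - intro; ring.
Qed.

Lemma fall_factor j c : exists Q, poly_lt j Q /\ forall x, fall j x - fall j c = (x - c) * Q x.
Proof.
  induction j as [|j [Q [HQ E]]].
  - exists (fun _ => 0). split; [apply poly_lt_zero | intros; simpl; ring].
  - exists (fun x => (x - INR j) * Q x + fall j c). split.
    + apply poly_lt_plus; [apply poly_lt_lin, HQ|].
      apply poly_lt_le with 1%nat; [lia | apply poly_lt_const].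
    + intro x. simpl.
      replace (fall j x * (x - INR j) - fall j c * (c - INR j))
        with ((fall j x - fall j c) * (x - INR j) + fall j c * (x - c)) by ring.
      rewrite E. ring.
Qed.

Lemma poly_lt_factor m p c : poly_lt (S m) p ->
  exists q, poly_lt m q /\ forall x, p x - p c = (x - c) * q x.
Proof.
  revert p; induction m as [|m IH]; intros p [p1 [b [H1 E]]].
  - exists (fun _ => 0). split; [apply poly_lt_zero|].
    intro x. rewrite !E, !H1. simpl. ring.
  - destruct (IH p1 H1) as [q1 [Hq1 E1]].
    destruct (fall_factor (S m) c) as [Q [HQ EQ]].
    exists (fun x => q1 x + b * Q x). split.
    + apply poly_lt_plus; [apply poly_lt_S, Hq1 | apply poly_lt_scal, HQ].
    + intro x. rewrite !E.
      replace (p1 x + b * fall (S m) x - (p1 c + b * fall (S m) c))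
        with ((p1 x - p1 c) + b * (fall (S m) x - fall (S m) c)) by ring.
      rewrite E1, EQ. ring.
Qed.
Definition moment (r c : nat -> R) (m : nat) (p : R -> R) : R :=
  sum_f_R0 (fun k => c k * p (r k)) m.

Lemma moment_annihilates r c m :
  (forall j, (j < m)%nat -> moment r c m (fall j) = 0) ->
  forall p, poly_lt m p -> moment r c m p = 0.
Proof.
  intros H.
  assert (G : forall j, (j <= m)%nat -> forall p, poly_lt j p -> moment r c m p = 0).
  { induction j as [|j IH]; intros Hj p Hp; unfold moment.
    - rewrite (sum_eq _ (fun _ => 0)), sum_cte by (intros; simpl in Hp; rewrite Hp; ring). ring.
    - destruct Hp as [q [b [Hq E]]].
      rewrite (sum_eq _ (fun k => c k * q (r k) + b * (c k * fall j (r k))))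
        by (intros; rewrite E; ring).
      rewrite sum_plus, sum_scal.
      fold (moment r c m q) (moment r c m (fall j)).
      rewrite IH, H by (auto with arith). ring. }
  intros p Hp. exact (G m (le_n m) p Hp).
Qed.

Section Weights.

Variable r : nat -> R.
Hypothesis r_incr : forall i, r i < r (S i).

Lemma r_lt i j : (i < j)%nat -> r i < r j.
Proof. induction 1; [apply r_incr | specialize (r_incr m); lra]. Qed.

(* The normalized weights w_m = (w_{m,0}, ..., w_{m,m}) of the unique (up to
   scaling) functional on the nodes r_0 < ... < r_m killing the polynomials of
   degree < m, built by w_{m+1,k} = w_{m,k} r_{m+1} / (r_{m+1} - r_k) for
   k <= m, and w_{m+1,m+1} making the total sum zero. *)
Fixpoint weight (m : nat) (k : nat) : R :=
  match m with
  | O => if (k =? 0)%nat then 1 else 0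
  | S m' => if (k <=? m')%nat then weight m' k * r (S m') / (r (S m') - r k)
            else if (k =? S m')%nat then
              - sum_f_R0 (fun i => weight m' i * r (S m') / (r (S m') - r i)) m'
            else 0
  end.

Lemma weight_step m k : (k <= m)%nat ->
  weight (S m) k = weight m k * r (S m) / (r (S m) - r k).
Proof. intro H. cbn [weight]. apply Nat.leb_le in H. now rewrite H. Qed.

Lemma weight_sum m : sum_f_R0 (weight (S m)) (S m) = 0.
Proof.
  change (sum_f_R0 (weight (S m)) (S m))
    with (sum_f_R0 (weight (S m)) m + weight (S m) (S m)).
  replace (weight (S m) (S m))
    with (- sum_f_R0 (fun i => weight m i * r (S m) / (r (S m) - r i)) m).
  - rewrite (sum_eq _ (fun i => weight m i * r (S m) / (r (S m) - r i))) by apply weight_step.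
    ring.
  - cbn [weight]. replace (S m <=? m)%nat with false by (symmetry; apply Nat.leb_gt; lia).
    now rewrite Nat.eqb_refl.
Qed.

Lemma weight_0 m : r 0%nat = 0 -> weight m 0 = 1.
Proof.
  intros H0. induction m as [|m IH]; [reflexivity|].
  rewrite weight_step, IH, H0 by lia.
  assert (0 < r (S m)) by (rewrite <- H0; apply r_lt; lia). field. lra.
Qed.

(* w_m kills the polynomials of degree < m: write p = p(r_{m+1}) + (x - r_{m+1}) q. *)
Lemma weight_annihilates m p : poly_lt m p -> moment r (weight m) m p = 0.
Proof.
  revert p; induction m as [|m IH]; intros p Hp; unfold moment.
  - simpl in *. rewrite Hp. ring.
  - destruct (poly_lt_factor m p (r (S m)) Hp) as [q [Hq E]].
    set (R := r (S m)).
    rewrite (sum_eq _ (fun k => p R * weight (S m) k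
                                + weight (S m) k * (r k - R) * q (r k)))
      by (intros i _; replace (p (r i)) with (p R + (p (r i) - p R)) by ring;
          rewrite E; fold R; ring).
    rewrite sum_plus, sum_scal, weight_sum, tech5.
    replace (r (S m) - R) with 0 by (unfold R; ring).
    rewrite (sum_eq _ (fun k => - R * (weight m k * q (r k)))).
    + rewrite sum_scal.
      fold (moment r (weight m) m q). rewrite IH by exact Hq. ring.
    + intros i Hi. rewrite weight_step by exact Hi.
      assert (r i < R) by (apply r_lt; lia). unfold R. field. fold R. lra.
Qed.

Fixpoint node_poly (k j : nat) (x : R) : R :=
  match j with
  | O => 1
  | S j' => node_poly k j' x * (if (S j' =? k)%nat then 1 else x - r (S j'))
  end.

Lemma node_poly_deg k j :
  poly_lt (S j) (node_poly k j) /\ ((1 <= k <= j)%nat -> poly_lt j (node_poly k j)).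
Proof.
  induction j as [|j [IH1 IH2]]; cbn [node_poly].
  - split; [apply poly_lt_const | lia].
  - assert (Hlin : forall n, poly_lt n (node_poly k j) ->
      poly_lt (S n) (fun x => node_poly k j x * (x - r (S j)))).
    { intros n Hn. apply poly_lt_ext with (fun x => (x - r (S j)) * node_poly k j x).
      apply poly_lt_lin, Hn. intro; ring. }
    destruct (Nat.eqb_spec (S j) k) as [Hk|Hk].
    + assert (E : forall x, node_poly k j x = node_poly k j x * 1) by (intro; ring).
      split; [|intros]; apply (poly_lt_ext _ (node_poly k j)); auto using poly_lt_S.
    + split; [apply Hlin, IH1|]. intro. apply Hlin, IH2. lia.
Qed.

Lemma node_poly_vanish k j i : (1 <= i <= j)%nat -> i <> k -> node_poly k j (r i) = 0.
Proof.
  induction j as [|j IH]; intros Hi Hik; [lia|]. cbn [node_poly].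
  destruct (Nat.eq_dec i (S j)) as [->|].
  - destruct (Nat.eqb_spec (S j) k); [lia | ring].
  - rewrite IH by lia. ring.
Qed.

Lemma node_poly_nonzero k j : node_poly k j (r k) <> 0.
Proof.
  induction j as [|j IH]; cbn [node_poly]; [lra|].
  apply Rmult_integral_contrapositive. split; [exact IH|].
  destruct (Nat.eqb_spec (S j) k) as [|Hk]; [lra|].
  assert (r (S j) <> r k).
  { destruct (Nat.lt_trichotomy (S j) k) as [H|[H|H]];
      [apply r_lt in H; lra | lia | apply r_lt in H; lra]. }
  lra.
Qed.

(* Uniqueness: a functional on r_0 < ... < r_m killing the polynomials of
   degree < m is a multiple of w_m; test it against the node polynomials. *)
Lemma weight_unique m c : r 0%nat = 0 ->
  (forall p, poly_lt m p -> moment r c m p = 0) ->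
  forall k, (k <= m)%nat -> c k = c 0%nat * weight m k.
Proof.
  intros H0 Hc k Hk.
  destruct (Nat.eq_dec k 0) as [->|Hk0]; [rewrite weight_0; [ring | exact H0]|].
  set (d := fun i => c i - c 0%nat * weight m i).
  assert (Hd : moment r d m (node_poly k m) = 0).
  { unfold moment, d.
    rewrite (sum_eq _ (fun i => c i * node_poly k m (r i)
                     + (- c 0%nat) * (weight m i * node_poly k m (r i)))) by (intros; ring).
    rewrite sum_plus, sum_scal.
    fold (moment r c m (node_poly k m)) (moment r (weight m) m (node_poly k m)).
    assert (Hp : poly_lt m (node_poly k m)) by (apply node_poly_deg; lia).
    rewrite Hc, weight_annihilates by exact Hp. ring. }
  unfold moment in Hd. rewrite (sum_single _ m k) in Hd; [|exact Hk|].
  - apply Rmult_integral in Hd as [Hd|Hd]; [unfold d in Hd; lra|].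
    exfalso. exact (node_poly_nonzero k m Hd).
  - intros i Hi Hik. destruct (Nat.eq_dec i 0) as [->|].
    + unfold d. rewrite weight_0 by exact H0. ring.
    + rewrite node_poly_vanish by lia. ring.
Qed.

End Weights.

Lemma Rpower_1_base x : Rpower 1 x = 1.
Proof. unfold Rpower. rewrite ln_1, Rmult_0_r. apply exp_0. Qed.

Lemma Rpower_pos t x : 0 < Rpower t x.
Proof. apply exp_pos. Qed.

Lemma Rpower_opp_mult t x : 0 < t -> Rpower t (- x) * Rpower t x = 1.
Proof. intro Ht. rewrite <- Rpower_plus, Rplus_opp_l. now apply Rpower_O. Qed.

Lemma Efun_ext e n c c' t : (forall k, (k <= n)%nat -> c k = c' k) ->
  Efun e n c t = Efun e n c' t.
Proof. intro H. apply sum_eq. intros k Hk. now rewrite H. Qed.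

Lemma Efun_at_1 e n c : Efun e n c 1 = sum_f_R0 c n.
Proof. apply sum_eq. intros. rewrite Rpower_1_base. ring. Qed.

Lemma derivable_pt_lim_eq f x l l' :
  derivable_pt_lim f x l -> l = l' -> derivable_pt_lim f x l'.
Proof. now intros H <-. Qed.

Lemma derivable_pt_lim_pos_ext f g x l : 0 < x -> (forall t, 0 < t -> f t = g t) ->
  derivable_pt_lim g x l -> derivable_pt_lim f x l.
Proof.
  intros Hx E H eps Heps. destruct (H eps Heps) as [d Hd].
  assert (Hm : 0 < Rmin d (x/2)) by (apply Rmin_pos; [apply cond_pos | lra]).
  exists (mkposreal _ Hm). intros h Hh Hhd. simpl in Hhd.
  assert (Hh1 : Rabs h < d) by (eapply Rlt_le_trans; [apply Hhd | apply Rmin_l]).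
  assert (Hh2 : Rabs h < x/2) by (eapply Rlt_le_trans; [apply Hhd | apply Rmin_r]).
  apply Rabs_def2 in Hh2. rewrite !E by lra. now apply Hd.
Qed.

Lemma derivative_unique_pos_ext f g x l1 l2 : 0 < x -> (forall t, 0 < t -> f t = g t) ->
  derivable_pt_lim f x l1 -> derivable_pt_lim g x l2 -> l1 = l2.
Proof.
  intros Hx E H1 H2. apply (uniqueness_limite f x); [exact H1|].
  eapply derivable_pt_lim_pos_ext; eauto.
Qed.

Lemma derivable_pt_lim_sum (f : nat -> R -> R) (l : nat -> R) x n :
  (forall k, (k <= n)%nat -> derivable_pt_lim (f k) x (l k)) ->
  derivable_pt_lim (fun t => sum_f_R0 (fun k => f k t) n) x (sum_f_R0 l n).
Proof.
  induction n as [|n IH]; intros H; simpl; [now apply H|].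
  apply (derivable_pt_lim_plus (fun t => sum_f_R0 (fun k => f k t) n) (f (S n)));
    auto.
Qed.

Lemma derivable_pt_lim_mulr f x l c :
  derivable_pt_lim f x l -> derivable_pt_lim (fun t => f t * c) x (l * c).
Proof.
  intro H. apply (derivable_pt_lim_eq _ _ (l * c + f x * 0));
    [apply (derivable_pt_lim_mult f (fct_cte c)), derivable_pt_lim_const; exact H | ring].
Qed.

Lemma derivable_pt_lim_Rpower t e : 0 < t ->
  derivable_pt_lim (fun s => Rpower s e) t (e * Rpower t e / t).
Proof.
  intro Ht. apply (derivable_pt_lim_eq _ _ (e * Rpower t (e - 1)));
    [now apply derivable_pt_lim_power|].
  replace (Rpower t e) with (Rpower t (e - 1) * Rpower t 1)
    by (rewrite <- Rpower_plus; f_equal; ring).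
  rewrite Rpower_1 by exact Ht. field. lra.
Qed.

Lemma Efun_deriv e n c t : 0 < t ->
  derivable_pt_lim (Efun e n c) t (Efun (fun k => e k - 1) n (fun k => c k * e k) t).
Proof.
  intro Ht. apply (derivable_pt_lim_sum (fun k s => c k * Rpower s (e k))).
  intros k _. rewrite Rmult_assoc. apply derivable_pt_lim_scal.
  now apply derivable_pt_lim_power.
Qed.

Lemma Efun_euler_deriv e n c t : 0 < t ->
  derivable_pt_lim (Efun e n c) t (Efun e n (fun k => c k * e k) t / t).
Proof.
  intro Ht.
  apply (derivable_pt_lim_eq _ _ (sum_f_R0 (fun k => c k * (e k * Rpower t (e k) / t)) n)).
  - apply (derivable_pt_lim_sum (fun k s => c k * Rpower s (e k))).
    intros k _. now apply derivable_pt_lim_scal, derivable_pt_lim_Rpower.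
  - unfold Efun, Rdiv. rewrite (Rmult_comm _ (/ t)), <- sum_scal.
    apply sum_eq. intros; ring.
Qed.

Lemma fall_shift j x : x * fall j (x - 1) = fall (S j) x.
Proof.
  induction j as [|j IH]; [simpl; ring|].
  change (fall (S (S j)) x) with (fall (S j) x * (x - INR (S j))).
  rewrite <- IH, S_INR. simpl. ring.
Qed.

Lemma Efun_nth_deriv j : forall e n c F, (forall t, 0 < t -> F t = Efun e n c t) ->
  exists g, has_nth_deriv j F g /\
    forall t, 0 < t -> g t = Efun (fun k => e k - INR j) n (fun k => c k * fall j (e k)) t.
Proof.
  induction j as [|j IH]; intros e n c F HF.
  - exists F. split; [intros t _; reflexivity|]. intros t Ht. rewrite HF by exact Ht.
    apply sum_eq. intros i _. simpl. f_equal; [ring | f_equal; ring].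
  - set (F' := Efun (fun k => e k - 1) n (fun k => c k * e k)).
    destruct (IH (fun k => e k - 1) n (fun k => c k * e k) F') as [g [Hg Eg]];
      [reflexivity|].
    exists g. split.
    + exists F'. split; [|exact Hg]. intros t Ht.
      eapply derivable_pt_lim_pos_ext; [exact Ht | exact HF | now apply Efun_deriv].
    + intros t Ht. rewrite Eg by exact Ht. apply sum_eq. intros i _.
      rewrite <- fall_shift, S_INR. f_equal; [ring | f_equal; ring].
Qed.

Lemma nonincreasing_of_deriv f f' t1 t2 : t1 <= t2 ->
  (forall s, t1 <= s <= t2 -> derivable_pt_lim f s (f' s)) ->
  (forall s, t1 <= s <= t2 -> f' s <= 0) -> f t2 <= f t1.
Proof.
  intros Ht Hd Hn. destruct (Req_dec t1 t2) as [->|Ne]; [lra|].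
  destruct (MVT_cor2 f f' t1 t2) as [xi [E H]]; [lra | exact Hd|].
  specialize (Hn xi ltac:(lra)). nra.
Qed.

(* Maximum principle for the Euler operator 1 - (t d/dt)/R, R > 0: if
   f - t f'/R <= 0 on [t1, t2] and f(t2) <= 0 then f(t1) <= 0, because
   t^{-R} f is then nondecreasing.  D stands for t f'. *)
Lemma euler_comparison f D R t1 t2 : 0 < R -> 0 < t1 <= t2 ->
  (forall s, t1 <= s <= t2 -> derivable_pt_lim f s (D s / s)) ->
  (forall s, t1 <= s <= t2 -> f s - D s / R <= 0) ->
  f t2 <= 0 -> f t1 <= 0.
Proof.
  intros HR Ht Hd Hle H2.
  set (G := fun s => - (Rpower s (- R) * f s)).
  assert (HG : G t2 <= G t1).
  { apply (nonincreasing_of_deriv G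
      (fun s => - ((- R) * Rpower s (- R) / s * f s + Rpower s (- R) * (D s / s))));
      [lra| |].
    - intros s Hs. apply derivable_pt_lim_opp.
      apply (derivable_pt_lim_mult (fun s => Rpower s (- R)) f);
        [apply derivable_pt_lim_Rpower; lra | now apply Hd].
    - intros s Hs. specialize (Hle s Hs). pose proof (Rpower_pos s (- R)).
      replace (- ((- R) * Rpower s (- R) / s * f s + Rpower s (- R) * (D s / s)))
        with ((R * Rpower s (- R) / s) * (f s - D s / R)) by (field; lra).
      assert (0 < R * Rpower s (- R) / s) by (apply Rdiv_lt_0_compat; nra).
      nra. }
  unfold G in HG. pose proof (Rpower_pos t1 (- R)). pose proof (Rpower_pos t2 (- R)).
  nra.
Qed.

Section Phi.

Variable r : nat -> R.
Hypothesis r_0 : r 0%nat = 0.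
Hypothesis r_incr : forall i, r i < r (S i).

Lemma r_pos k : (1 <= k)%nat -> 0 < r k.
Proof. intro. rewrite <- r_0. now apply r_lt. Qed.

(* phi j m = theta^j phi_m, where theta = t d/dt and
   phi_m(t) = sum_{k<=m} w_{m,k} t^{r_k}: the element of E(Lambda_m) with
   leading weight w_{m,0} = 1 whose coefficients kill the polynomials of
   degree < m, i.e. with an m-fold zero at t = 1. *)
Definition phi (j m : nat) (t : R) : R :=
  Efun r m (fun k => weight r m k * r k ^ j) t.

Lemma phi_euler_deriv j m t : 0 < t ->
  derivable_pt_lim (phi j m) t (phi (S j) m t / t).
Proof.
  intro Ht. apply (derivable_pt_lim_eq _ _ _ _ (Efun_euler_deriv _ _ _ _ Ht)).
  f_equal. apply Efun_ext. intros. simpl. ring.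
Qed.

Lemma phi_recurrence j m t :
  phi j (S m) t - phi (S j) (S m) t / r (S m) = phi j m t.
Proof.
  assert (HR : 0 < r (S m)) by (apply r_pos; lia).
  unfold phi, Efun, Rdiv. rewrite (Rmult_comm _ (/ r (S m))), <- sum_scal, <- minus_sum.
  rewrite tech5.
  replace (weight r (S m) (S m) * r (S m) ^ j * Rpower t (r (S m))
           - / r (S m) * (weight r (S m) (S m) * r (S m) ^ S j * Rpower t (r (S m))))
    with 0 by (simpl; field; lra).
  rewrite Rplus_0_r. apply sum_eq. intros i Hi. rewrite weight_step by exact Hi.
  assert (r i < r (S m)) by (apply r_lt; [exact r_incr | lia]). simpl. field. lra.
Qed.

Lemma phi0_at_1 m : phi 0 (S m) 1 = 0.
Proof.
  unfold phi. rewrite Efun_at_1, <- (weight_sum r m). apply sum_eq. intros. simpl. ring.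
Qed.

Lemma phi1_at_1 m : phi 1 (S (S m)) 1 = 0.
Proof.
  pose proof (phi_recurrence 0 (S m) 1) as H. rewrite !phi0_at_1 in H.
  assert (0 < r (S (S m))) by (apply r_pos; lia).
  apply (Rmult_eq_reg_r (/ r (S (S m)))); [lra | apply Rinv_neq_0_compat; lra].
Qed.

Lemma phi0_zero t : 0 < t -> phi 0 0 t = 1.
Proof. intro. unfold phi, Efun. simpl. rewrite r_0, Rpower_O by assumption. ring. Qed.

Lemma phi1_one t : phi 1 1 t = - r 1%nat * Rpower t (r 1%nat).
Proof.
  unfold phi, Efun. simpl. rewrite r_0.
  assert (0 < r 1%nat) by (apply r_pos; lia). field. lra.
Qed.

(* theta phi_m <= 0 on ]0, 1], by the maximum principle, since
   (1 - theta / r_{m+1}) theta phi_{m+1} = theta phi_m and (theta phi_{m+1})(1) = 0. *)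
Lemma phi1_nonpos m t : (1 <= m)%nat -> 0 < t <= 1 -> phi 1 m t <= 0.
Proof.
  intros Hm. revert t. induction Hm as [|m Hm IH]; intros t Ht.
  - rewrite phi1_one. pose proof (r_pos 1%nat (le_n 1)). pose proof (Rpower_pos t (r 1%nat)).
    nra.
  - destruct m as [|m]; [lia|].
    apply (euler_comparison _ (phi 2 (S (S m))) (r (S (S m))) t 1);
      [apply r_pos; lia | lra | | | now rewrite phi1_at_1].
    + intros s Hs. apply phi_euler_deriv. lra.
    + intros s Hs. rewrite phi_recurrence. apply IH. lra.
Qed.

Lemma phi1_lower m t : (1 <= m)%nat -> 0 < t <= 1 -> - r 1%nat <= phi 1 m t.
Proof.
  intros Hm. revert t. induction Hm as [|m Hm IH]; intros t Ht.
  - rewrite phi1_one. pose proof (r_pos 1%nat (le_n 1)).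
    assert (Rpower t (r 1%nat) <= 1)
      by (rewrite <- (Rpower_1_base (r 1%nat)); apply Rle_Rpower_l; lra).
    nra.
  - destruct m as [|m]; [lia|].
    set (R := r (S (S m))). assert (HR : 0 < R) by (apply r_pos; lia).
    enough (H : - phi 1 (S (S m)) t - r 1%nat <= 0) by lra.
    apply (euler_comparison (fun s => - phi 1 (S (S m)) s - r 1%nat)
             (fun s => - phi 2 (S (S m)) s) R t 1); [exact HR | lra | | |].
    + intros s Hs. apply (derivable_pt_lim_eq _ _ (- (phi 2 (S (S m)) s / s) - 0)).
      * apply (derivable_pt_lim_minus (fun s => - phi 1 (S (S m)) s) (fct_cte _)).
        -- apply derivable_pt_lim_opp, phi_euler_deriv. lra.
        -- apply derivable_pt_lim_const.
      * field. lra.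
    + intros s Hs. pose proof (phi_recurrence 1 (S m) s). specialize (IH s ltac:(lra)).
      fold R in H. replace (- phi 2 (S (S m)) s / R) with (- (phi 2 (S (S m)) s / R))
        by (field; lra). lra.
    + rewrite phi1_at_1. pose proof (r_pos 1%nat (le_n 1)). lra.
Qed.

(* phi_m is nonincreasing on ]0, 1] since theta phi_m <= 0 ... *)
Lemma phi0_nonincreasing m t1 t2 : 0 < t1 <= t2 -> t2 <= 1 -> phi 0 m t2 <= phi 0 m t1.
Proof.
  intros Ht Ht2. destruct m as [|m]; [rewrite !phi0_zero; lra|].
  apply (nonincreasing_of_deriv _ (fun s => phi 1 (S m) s / s)); [lra | |].
  - intros s Hs. apply phi_euler_deriv. lra.
  - intros s Hs. pose proof (phi1_nonpos (S m) s ltac:(lia) ltac:(lra)).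
    unfold Rdiv. assert (0 < / s) by (apply Rinv_0_lt_compat; lra). nra.
Qed.

(* ... hence nonnegative there, as phi_m(1) = 0 for m >= 1. *)
Lemma phi0_nonneg m t : 0 < t <= 1 -> 0 <= phi 0 m t.
Proof.
  intro Ht. destruct m as [|m]; [rewrite phi0_zero; lra|].
  rewrite <- (phi0_at_1 m). apply phi0_nonincreasing; lra.
Qed.

(* phi_{m+1} = phi_m + (theta phi_{m+1}) / r_{m+1} <= phi_m on ]0, 1]. *)
Lemma phi0_antitone m N t : (m <= N)%nat -> 0 < t <= 1 -> phi 0 N t <= phi 0 m t.
Proof.
  intros H Ht. induction H as [|N H IH]; [lra|].
  pose proof (phi_recurrence 0 N t). pose proof (phi1_nonpos (S N) t ltac:(lia) Ht).
  assert (0 < r (S N)) by (apply r_pos; lia).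
  assert (phi 1 (S N) t / r (S N) <= 0)
    by (unfold Rdiv; assert (0 < / r (S N)) by (apply Rinv_0_lt_compat; lra); nra).
  lra.
Qed.

(* phi_{m+1}(t) >= phi_m(v) (1 - (t/v)^{r_{m+1}}) for 0 < t < v <= 1, by
   comparison with the solution of the recurrence with phi_m frozen at phi_m(v). *)
Lemma phi0_step_lower m t v : 0 < t < v -> v <= 1 ->
  phi 0 m v * (1 - Rpower v (- r (S m)) * Rpower t (r (S m))) <= phi 0 (S m) t.
Proof.
  intros Htv Hv. set (R := r (S m)). assert (HR : 0 < R) by (apply r_pos; lia).
  set (G := phi 0 m v). set (K := G * Rpower v (- R)).
  enough (H : G - K * Rpower t R - phi 0 (S m) t <= 0) by (unfold K in H; nra).
  apply (euler_comparison (fun s => G - K * Rpower s R - phi 0 (S m) s)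
           (fun s => - K * R * Rpower s R - phi 1 (S m) s) R t v); [exact HR | lra | | |].
  - intros s Hs.
    apply (derivable_pt_lim_eq _ _ ((0 - K * (R * Rpower s R / s)) - phi 1 (S m) s / s)).
    + apply (derivable_pt_lim_minus (fun s => G - K * Rpower s R) (phi 0 (S m))).
      * apply (derivable_pt_lim_minus (fct_cte G) (fun s => K * Rpower s R)).
        -- apply derivable_pt_lim_const.
        -- apply derivable_pt_lim_scal, derivable_pt_lim_Rpower. lra.
      * apply phi_euler_deriv. lra.
    + field. lra.
  - intros s Hs. pose proof (phi_recurrence 0 m s). fold R in H.
    assert (phi 0 m v <= phi 0 m s) by (apply phi0_nonincreasing; lra). fold G in H0.
    replace (G - K * Rpower s R - phi 0 (S m) s - (- K * R * Rpower s R - phi 1 (S m) s) / R)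
      with (G - (phi 0 (S m) s - phi 1 (S m) s / R)) by (field; lra).
    lra.
  - unfold K. rewrite Rmult_assoc, Rpower_opp_mult by lra.
    pose proof (phi0_nonneg (S m) v ltac:(lra)). lra.
Qed.

(* Upper barriers propagate: if 1 - phi_m <= A + beta x^s on [t, 1], then
   1 - phi_{m+1}(t) <= A + beta' t^s provided beta <= beta' (1 - s/r_{m+1})
   and the barrier dominates at t = 1; indeed 1 - theta/r_{m+1} maps
   1 - phi_{m+1} to 1 - phi_m and x^s to (1 - s/r_{m+1}) x^s. *)
Lemma phi0_step_upper m A beta beta' s t : 0 < t <= 1 ->
  (forall x, t <= x <= 1 -> 1 - phi 0 m x <= A + beta * Rpower x s) ->
  beta <= beta' * (1 - s / r (S m)) -> 1 <= A + beta' ->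
  1 - phi 0 (S m) t <= A + beta' * Rpower t s.
Proof.
  intros Ht Hbar Hbeta Hone. set (R := r (S m)) in *.
  assert (HR : 0 < R) by (apply r_pos; lia).
  enough (H : 1 - phi 0 (S m) t - A - beta' * Rpower t s <= 0) by lra.
  apply (euler_comparison (fun x => 1 - phi 0 (S m) x - A - beta' * Rpower x s)
           (fun x => - phi 1 (S m) x - beta' * (s * Rpower x s)) R t 1);
    [exact HR | lra | | |].
  - intros x Hx.
    apply (derivable_pt_lim_eq _ _ ((0 - phi 1 (S m) x / x) - 0 - beta' * (s * Rpower x s / x))).
    + apply (derivable_pt_lim_minus (fun x => 1 - phi 0 (S m) x - A) (fun x => beta' * Rpower x s)).
      * apply (derivable_pt_lim_minus (fun x => 1 - phi 0 (S m) x) (fct_cte A));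
          [|apply derivable_pt_lim_const].
        apply (derivable_pt_lim_minus (fct_cte 1) (phi 0 (S m)));
          [apply derivable_pt_lim_const | apply phi_euler_deriv; lra].
      * apply derivable_pt_lim_scal, derivable_pt_lim_Rpower. lra.
    + field. lra.
  - intros x Hx. pose proof (phi_recurrence 0 m x) as Hrec. fold R in Hrec.
    specialize (Hbar x Hx). pose proof (Rpower_pos x s).
    assert (beta * Rpower x s <= beta' * (1 - s / R) * Rpower x s)
      by (apply Rmult_le_compat_r; lra).
    replace (1 - phi 0 (S m) x - A - beta' * Rpower x s
             - (- phi 1 (S m) x - beta' * (s * Rpower x s)) / R)
      with (1 - (phi 0 (S m) x - phi 1 (S m) x / R) - A
            - beta' * (1 - s / R) * Rpower x s) by (field; lra).
    rewrite Hrec. lra.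
  - rewrite phi0_at_1, Rpower_1_base. lra.
Qed.

(* phi_m > 0 on ]0, 1[, by induction through phi0_step_lower with v = (t+1)/2. *)
Lemma phi0_pos m t : 0 < t < 1 -> 0 < phi 0 m t.
Proof.
  revert t. induction m as [|m IH]; intros t Ht; [rewrite phi0_zero; lra|].
  set (v := (t + 1) / 2). set (R := r (S m)). assert (HR : 0 < R) by (apply r_pos; lia).
  assert (Hsmall : Rpower v (- R) * Rpower t R < 1).
  { assert (Rpower t R < Rpower v R) by (apply Rlt_Rpower_l; unfold v; lra).
    pose proof (Rpower_opp_mult v R ltac:(unfold v; lra)). pose proof (Rpower_pos v (- R)).
    nra. }
  pose proof (phi0_step_lower m t v ltac:(unfold v; lra) ltac:(unfold v; lra)).
  pose proof (IH v ltac:(unfold v; lra)). fold R in H. nra.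
Qed.

End Phi.

(* For 0 < a < u there is s > 0 with (a/u)^s = 1/4, namely s = ln 4 / ln (u/a). *)
Lemma quarter_exponent a u : 0 < a < u -> exists s, 0 < s /\ Rpower a s * Rpower u (- s) = / 4.
Proof.
  intro Hau. set (L := ln u - ln a).
  assert (HL : 0 < L) by (pose proof (ln_increasing a u ltac:(lra) ltac:(lra)); unfold L; lra).
  exists (2 * ln 2 / L). split; [pose proof ln_lt_2; apply Rdiv_lt_0_compat; lra|].
  unfold Rpower. rewrite <- exp_plus.
  replace (2 * ln 2 / L * ln a + - (2 * ln 2 / L) * ln u) with (- (ln 2 + ln 2))
    by (unfold L; field; fold L; lra).
  rewrite exp_Ropp, exp_plus, exp_ln by lra. field.
Qed.

Section UniformLowerBound.

Variable r : nat -> R.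
Hypothesis r_0 : r 0%nat = 0.
Hypothesis r_incr : forall i, r i < r (S i).
Hypothesis r_summable : exists l, Un_cv (fun N => sum_f_R0 (fun i => / r (S i)) N) l.

Fixpoint tail (N j : nat) : R :=
  match j with O => 0 | S j' => tail N j' + / r (N + S j') end.

Lemma tail_nonneg N j : 0 <= tail N j.
Proof.
  induction j as [|j IH]; simpl; [lra|].
  pose proof (r_pos r r_0 r_incr (N + S j) ltac:(lia)).
  pose proof (Rinv_0_lt_compat _ H). lra.
Qed.

Lemma tail_small eps : 0 < eps -> exists N, forall j, tail N j <= eps.
Proof.
  intro Heps. destruct r_summable as [l Hl].
  set (S_ := fun k => sum_f_R0 (fun i => / r (S i)) k).
  assert (Hgrow : Un_growing S_).
  { intro n. unfold S_. simpl. pose proof (r_pos r r_0 r_incr (S (S n)) ltac:(lia)).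
    pose proof (Rinv_0_lt_compat _ H). lra. }
  destruct (Hl eps Heps) as [N HN]. exists (S N). intro j.
  assert (E : tail (S N) j = S_ (N + j)%nat - S_ N).
  { induction j as [|j IH]; simpl tail; [rewrite Nat.add_0_r; ring|].
    rewrite IH. unfold S_. replace (N + S j)%nat with (S (N + j)) by lia. simpl. ring. }
  specialize (HN N (le_n N)). unfold R_dist in HN. apply Rabs_def2 in HN.
  pose proof (growing_ineq S_ l Hgrow Hl (N + j)). unfold S_ in *. lra.
Qed.

(* Base of the induction: 1 - phi_N(t) <= (1 - d) + d (t/u)^s with d = phi_N(u),
   using that phi_N is nonincreasing and nonnegative on ]0, 1]. *)
Lemma phi0_base_bound N u s t : 0 < u < 1 -> 0 <= s -> 0 < t <= 1 ->
  1 - phi r 0 N t <= 1 - phi r 0 N u + phi r 0 N u * Rpower u (- s) * Rpower t s.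
Proof.
  intros Hu Hs Ht. pose proof (phi0_nonneg r r_0 r_incr N u ltac:(lra)).
  destruct (Rle_dec t u) as [Htu|Htu].
  - pose proof (phi0_nonincreasing r r_0 r_incr N t u ltac:(lra) ltac:(lra)).
    assert (0 <= phi r 0 N u * Rpower u (- s) * Rpower t s).
    { pose proof (Rpower_pos u (- s)). pose proof (Rpower_pos t s).
      apply Rmult_le_pos; [apply Rmult_le_pos|]; lra. }
    lra.
  - pose proof (phi0_nonneg r r_0 r_incr N t Ht).
    assert (Rpower u s <= Rpower t s) by (apply Rle_Rpower_l; lra).
    pose proof (Rpower_opp_mult u s ltac:(lra)). pose proof (Rpower_pos u (- s)).
    assert (1 <= Rpower u (- s) * Rpower t s) by nra. nra.
Qed.

(* The coefficient bookkeeping of the propagation step below: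
   (1 - x)(1 - y) >= 1 - (x + y) for x, y >= 0. *)
Lemma coef_step B0 x y : 0 <= B0 -> 0 <= y -> 0 <= x -> y + x <= 1 / 2 ->
  B0 / (1 - y) <= B0 / (1 - (y + x)) * (1 - x).
Proof.
  intros HB Hy Hx Hxy.
  replace (B0 / (1 - (y + x)) * (1 - x))
    with (B0 / (1 - y) + B0 * x * y / ((1 - y) * (1 - (y + x)))) by (field; lra).
  assert (0 <= B0 * x * y / ((1 - y) * (1 - (y + x)))).
  { apply Rmult_le_pos; [apply Rmult_le_pos; [apply Rmult_le_pos|]; lra|].
    left. apply Rinv_0_lt_compat. nra. }
  lra.
Qed.

Lemma le_div_one_minus B0 z : 0 <= B0 -> 0 <= z <= 1 / 2 -> B0 <= B0 / (1 - z).
Proof.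
  intros HB Hz. apply Rmult_le_reg_r with (1 - z); [lra|].
  unfold Rdiv. rewrite Rmult_assoc, Rinv_l by lra. nra.
Qed.

(* Propagation: if 1 - phi_N <= (1 - d) + B0 t^s on ]0, 1], then
   1 - phi_{N+j} <= (1 - d) + B0 t^s / (1 - s tail N j), as long as
   s tail N j <= 1/2.  Induction on j through the maximum principle for
   1 - theta / r_{N+j+1}, which maps t^s to (1 - s / r_{N+j+1}) t^s. *)
Lemma phi0_tail_propagation N s d B0 : 0 < s -> 0 <= d <= B0 ->
  (forall j, s * tail N j <= 1 / 2) ->
  (forall t, 0 < t <= 1 -> 1 - phi r 0 N t <= 1 - d + B0 * Rpower t s) ->
  forall j t, 0 < t <= 1 ->
    1 - phi r 0 (N + j) t <= 1 - d + B0 / (1 - s * tail N j) * Rpower t s.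
Proof.
  intros Hs Hd Htail Hbase j. induction j as [|j IH]; intros t Ht.
  - rewrite Nat.add_0_r. simpl tail. replace (1 - s * 0) with 1 by ring.
    rewrite Rdiv_1_r. now apply Hbase.
  - cbn [tail]. set (R := r (N + S j)). set (T := tail N j).
    assert (HR : 0 < R) by (apply r_pos; [exact r_0 | exact r_incr | lia]).
    assert (HT : 0 <= T) by apply tail_nonneg.
    assert (HT' : s * (T + / R) <= 1 / 2) by apply (Htail (S j)).
    assert (HsR : 0 < s / R) by (apply Rdiv_lt_0_compat; lra).
    replace (s * (T + / R)) with (s * T + s / R) in HT' |- * by (unfold Rdiv; ring).
    set (beta := B0 / (1 - s * T)). set (beta' := B0 / (1 - (s * T + s / R))).
    assert (Hbeta : beta <= beta' * (1 - s / R)) by (apply coef_step; nra).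
    assert (Hbeta' : B0 <= beta') by (apply le_div_one_minus; nra).
    replace (N + S j)%nat with (S (N + j)) by lia.
    apply (phi0_step_upper r r_0 r_incr (N + j) (1 - d) beta); [exact Ht | | | lra].
    + intros x Hx. apply IH. lra.
    + replace (r (S (N + j))) with R by (unfold R; f_equal; lia). exact Hbeta.
Qed.

(* Once the tail beyond N is small compared to 1/s, phi_m(a) stays above
   phi_N(u)/2 for all m, provided (a/u)^s = 1/4: beyond N by propagating the
   barrier of phi0_base_bound (whose coefficient at most doubles), below N by
   monotonicity in m. *)
Lemma phi0_lower_from N a u s : 0 < a < u -> u < 1 -> 0 < s ->
  Rpower a s * Rpower u (- s) = / 4 -> (forall j, s * tail N j <= 1 / 2) ->
  forall m, phi r 0 N u / 2 <= phi r 0 m a.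
Proof.
  intros Hau Hu Hs Hquarter Htail m. set (d := phi r 0 N u).
  assert (Hd : 0 <= d) by (apply phi0_nonneg; [exact r_0 | exact r_incr | lra]).
  set (B0 := d * Rpower u (- s)).
  assert (HB0 : d <= B0).
  { assert (Rpower u s <= 1) by (rewrite <- (Rpower_1_base s); apply Rle_Rpower_l; lra).
    pose proof (Rpower_opp_mult u s ltac:(lra)). pose proof (Rpower_pos u s).
    unfold B0. nra. }
  destruct (Nat.le_gt_cases N m) as [HNm|HmN].
  - replace m with (N + (m - N))%nat by lia.
    pose proof (phi0_tail_propagation N s d B0 Hs ltac:(lra) Htail
      (fun t Ht => phi0_base_bound N u s t ltac:(lra) ltac:(lra) Ht) (m - N) a ltac:(lra)).
    specialize (Htail (m - N)%nat). pose proof (tail_nonneg N (m - N)).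
    set (T := tail N (m - N)) in *.
    assert (Hcoef : B0 / (1 - s * T) <= 2 * B0).
    { apply Rmult_le_reg_r with (1 - s * T); [nra|].
      unfold Rdiv. rewrite Rmult_assoc, Rinv_l by nra. nra. }
    assert (B0 * Rpower a s = d / 4)
      by (unfold B0; rewrite Rmult_assoc, (Rmult_comm (Rpower u (- s))), Hquarter; field).
    pose proof (Rpower_pos a s).
    assert (B0 / (1 - s * T) * Rpower a s <= 2 * B0 * Rpower a s)
      by (apply Rmult_le_compat_r; lra).
    lra.
  - pose proof (phi0_antitone r r_0 r_incr m N a ltac:(lia) ltac:(lra)).
    pose proof (phi0_nonincreasing r r_0 r_incr N a u ltac:(lra) ltac:(lra)).
    fold d in H0. lra.
Qed.

Lemma phi0_uniform_lower a : 0 < a < 1 -> exists d, 0 < d /\ forall m, d <= phi r 0 m a.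
Proof.
  intro Ha. set (u := (a + 1) / 2). assert (Hu : a < u < 1) by (unfold u; lra).
  destruct (quarter_exponent a u ltac:(lra)) as [s [Hs Hquarter]].
  destruct (tail_small (/ (2 * s))) as [N HN]; [apply Rinv_0_lt_compat; lra|].
  assert (Htail : forall j, s * tail N j <= 1 / 2).
  { intro j. specialize (HN j). apply Rmult_le_compat_l with (r := s) in HN; [|lra].
    replace (s * / (2 * s)) with (1 / 2) in HN by (field; lra). exact HN. }
  exists (phi r 0 N u / 2). split.
  - pose proof (phi0_pos r r_0 r_incr N u ltac:(lra)). lra.
  - exact (phi0_lower_from N a u s ltac:(lra) ltac:(lra) Hs Hquarter Htail).
Qed.

End UniformLowerBound.

Lemma norm_inf_nonneg s v : 0 <= norm_inf s v.
Proof.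
  induction s as [|s IH]; simpl; [lra|].
  apply Rle_trans with (norm_inf s v); [exact IH | apply Rmax_l].
Qed.

Lemma norm_inf_ge s v i : (i < s)%nat -> Rabs (v i) <= norm_inf s v.
Proof.
  induction s as [|s IH]; intro H; [lia|]. simpl.
  destruct (Nat.eq_dec i s) as [->|]; [apply Rmax_r|].
  apply Rle_trans with (norm_inf s v); [apply IH; lia | apply Rmax_l].
Qed.

Lemma norm_inf_pos s v : (exists i, (i < s)%nat /\ v i <> 0) -> 0 < norm_inf s v.
Proof.
  intros [i [Hi Hv]]. pose proof (norm_inf_ge s v i Hi). pose proof (Rabs_pos_lt _ Hv). lra.
Qed.

Lemma norm_inf_ext s v w : (forall i, (i < s)%nat -> v i = w i) -> norm_inf s v = norm_inf s w.
Proof.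
  induction s as [|s IH]; intro H; simpl; [reflexivity|].
  rewrite IH, H; [reflexivity | lia | intros; apply H; lia].
Qed.

Lemma norm_inf_scal s v x : norm_inf s (fun i => x * v i) = Rabs x * norm_inf s v.
Proof.
  induction s as [|s IH]; simpl; [ring|]. rewrite IH, Rabs_mult.
  pose proof (Rabs_pos x). unfold Rmax.
  destruct (Rle_dec (Rabs x * norm_inf s v) (Rabs x * Rabs (v s)));
  destruct (Rle_dec (norm_inf s v) (Rabs (v s))); nra.
Qed.

Lemma norm_inf_ratio s v w lam c : 0 < c -> Rabs lam <= c ->
  (forall i, (i < s)%nat -> v i = lam * w i) -> norm_inf s w >= norm_inf s v / c.
Proof.
  intros Hc Hlam Hv. rewrite (norm_inf_ext s v (fun i => lam * w i) Hv), norm_inf_scal.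
  pose proof (norm_inf_nonneg s w). apply Rle_ge.
  apply Rmult_le_reg_r with c; [exact Hc|].
  unfold Rdiv. rewrite Rmult_assoc, Rinv_l by lra. nra.
Qed.

Section ChebyshevBernstein.

Variable r : nat -> R.
Hypothesis r_0 : r 0%nat = 0.
Hypothesis r_incr : forall i, r i < r (S i).
Variables (m : nat) (a : R) (B : nat -> R -> R).
Hypothesis m_pos : (1 <= m)%nat.
Hypothesis a_range : 0 < a < 1.
Hypothesis B_basis : CB_basis r m a 1 B.

Lemma CB_coefficients :
  exists C : nat -> nat -> R, forall k, (k <= m)%nat -> forall t, 0 < t -> B k t = Efun r m (C k) t.
Proof.
  apply (finite_choice (fun k c => forall t, 0 < t -> B k t = Efun r m c t)).
  apply B_basis.
Qed.

(* B_k(a) = 0 for k >= 1, hence B_0(a) = 1 by the partition of unity. *)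
Lemma CB_vanish_at_a k : (1 <= k <= m)%nat -> B k a = 0.
Proof.
  intro Hk. destruct B_basis as [_ [_ [_ Hmult]]].
  destruct (Hmult k ltac:(lia)) as [[_ [Hz _]] _].
  apply (Hz 0%nat (B k)); [lia | intros t _; reflexivity].
Qed.

Lemma CB_first_at_a : B 0%nat a = 1.
Proof.
  destruct B_basis as [_ [_ [Hunit _]]].
  rewrite <- (Hunit a ltac:(lra)). symmetry. apply (sum_single (fun k => B k a) m 0); [lia|].
  intros i Hi Hi0. apply CB_vanish_at_a. lia.
Qed.

(* B_0 has an m-fold zero at 1, so its coefficients kill the polynomials of
   degree < m; hence B_0 is a multiple of phi_m, normalized by B_0(a) = 1. *)
Lemma CB_first_eq_phi t : 0 < t -> B 0%nat t = phi r 0 m t * / phi r 0 m a.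
Proof.
  destruct CB_coefficients as [C HC].
  assert (Hkill : forall j, (j < m)%nat -> moment r (C 0%nat) m (fall j) = 0).
  { intros j Hj. destruct (Efun_nth_deriv j r m (C 0%nat) (B 0%nat)) as [g [Hg Eg]];
      [apply HC; lia|].
    destruct B_basis as [_ [_ [_ Hmult]]]. destruct (Hmult 0%nat ltac:(lia)) as [_ [_ [Hz _]]].
    specialize (Hz j g ltac:(lia) Hg). rewrite Eg, Efun_at_1 in Hz by lra.
    exact Hz. }
  assert (HB0 : forall t, 0 < t -> B 0%nat t = C 0%nat 0%nat * phi r 0 m t).
  { intros s Hs. rewrite HC by (lia || exact Hs). unfold phi, Efun. rewrite <- sum_scal.
    apply sum_eq. intros k Hk.
    rewrite (weight_unique r r_incr m (C 0%nat) r_0 (moment_annihilates r _ m Hkill)) by exact Hk.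
    simpl. ring. }
  intro Ht. pose proof (HB0 a ltac:(lra)) as Ha. rewrite CB_first_at_a in Ha.
  assert (phi r 0 m a <> 0) by (intro E; rewrite E in Ha; lra).
  assert (Hc : C 0%nat 0%nat = / phi r 0 m a).
  { apply (Rmult_eq_reg_r (phi r 0 m a)); [rewrite Rinv_l; lra | exact H]. }
  rewrite HB0, Hc by exact Ht. ring.
Qed.

(* The derivatives of the basis at a: B_k'(a) = 0 for k >= 2 (zeros of
   multiplicity k at a). *)
Lemma CB_derivatives_at_a : exists dB : nat -> R,
  (forall k, (k <= m)%nat -> derivable_pt_lim (B k) a (dB k)) /\
  (forall k, (2 <= k <= m)%nat -> dB k = 0).
Proof.
  destruct CB_coefficients as [C HC].
  set (g := fun k t => Efun r m (fun j => C k j * r j) t / t).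
  assert (Hg : forall k t, (k <= m)%nat -> 0 < t -> derivable_pt_lim (B k) t (g k t)).
  { intros k t Hk Ht. apply (derivable_pt_lim_pos_ext _ (Efun r m (C k)) _ _ Ht);
      [intros; now apply HC | now apply Efun_euler_deriv]. }
  exists (fun k => g k a). split; [intros k Hk; apply Hg; [exact Hk | lra]|].
  intros k Hk. destruct B_basis as [_ [_ [_ Hmult]]].
  destruct (Hmult k ltac:(lia)) as [[_ [Hz _]] _].
  apply (Hz 1%nat (g k)); [lia|]. exists (g k). split; [|intros t _; reflexivity].
  intros t Ht. apply Hg; [lia | exact Ht].
Qed.

(* Differentiating the partition of unity: B_0'(a) + B_1'(a) = 0. *)
Lemma CB_deriv_sum dB :
  (forall k, (k <= m)%nat -> derivable_pt_lim (B k) a (dB k)) ->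
  (forall k, (2 <= k <= m)%nat -> dB k = 0) -> dB 1%nat = - dB 0%nat.
Proof.
  intros HdB Hvan. destruct B_basis as [_ [_ [Hunit _]]].
  assert (H : sum_f_R0 dB m = 0).
  { apply (derivative_unique_pos_ext (fun t => sum_f_R0 (fun k => B k t) m) (fct_cte 1) a);
      [lra | exact Hunit | apply derivable_pt_lim_sum, HdB | apply derivable_pt_lim_const]. }
  rewrite (sum_first_two dB m m_pos Hvan) in H. lra.
Qed.

(* B_0'(a) = (theta phi_m)(a) / (a phi_m(a)), from B_0 = phi_m / phi_m(a). *)
Lemma CB_deriv_first l : derivable_pt_lim (B 0%nat) a l ->
  l = phi r 1 m a / a * / phi r 0 m a.
Proof.
  intro Hl. apply (derivative_unique_pos_ext (B 0%nat) (fun t => phi r 0 m t * / phi r 0 m a) a);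
    [lra | exact CB_first_eq_phi | exact Hl |].
  apply derivable_pt_lim_mulr, phi_euler_deriv. lra.
Qed.

Lemma CB_deriv_combination dB (eta : nat -> R) F l :
  (forall k, (k <= m)%nat -> derivable_pt_lim (B k) a (dB k)) ->
  (forall k, (2 <= k <= m)%nat -> dB k = 0) ->
  (forall t, 0 < t -> F t = sum_f_R0 (fun k => B k t * eta k) m) ->
  derivable_pt_lim F a l -> l = dB 0%nat * (eta 0%nat - eta 1%nat).
Proof.
  intros HdB Hvan HF Hl.
  assert (E : l = sum_f_R0 (fun k => dB k * eta k) m).
  { apply (derivative_unique_pos_ext F (fun t => sum_f_R0 (fun k => B k t * eta k) m) a);
      [lra | exact HF | exact Hl |].
    apply (derivable_pt_lim_sum (fun k t => B k t * eta k)).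
    intros k Hk. now apply derivable_pt_lim_mulr, HdB. }
  rewrite E, sum_first_two, (CB_deriv_sum dB HdB Hvan) by (exact m_pos || (intros; rewrite Hvan; [ring | assumption])).
  ring.
Qed.

End ChebyshevBernstein.

(* The factor relating P'(a) to eta_0 - eta_1 is bounded by r_1 / (a d)
   whenever d <= phi_m(a), since |theta phi_m| <= r_1. *)
Lemma first_deriv_factor_bound r m a d : r 0%nat = 0 -> (forall i, r i < r (S i)) ->
  (1 <= m)%nat -> 0 < a < 1 -> 0 < d -> d <= phi r 0 m a ->
  Rabs (phi r 1 m a / a * / phi r 0 m a) <= r 1%nat / (a * d).
Proof.
  intros H0 Hincr Hm Ha Hd Hphi.
  pose proof (phi1_nonpos r H0 Hincr m a Hm ltac:(lra)).
  pose proof (phi1_lower r H0 Hincr m a Hm ltac:(lra)).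
  assert (Hq : a * d <= a * phi r 0 m a) by nra.
  assert (Hinv : / (a * phi r 0 m a) <= / (a * d)) by (apply Rinv_le_contravar; nra).
  assert (0 < / (a * phi r 0 m a)) by (apply Rinv_0_lt_compat; nra).
  replace (phi r 1 m a / a * / phi r 0 m a) with (phi r 1 m a * / (a * phi r 0 m a))
    by (field; lra).
  unfold Rdiv. apply Rabs_le. pose proof (r_pos r H0 Hincr 1 (le_n 1)). split; nra.
Qed.

(* The constant is c = r_1 / (a d) with d from phi0_uniform_lower. *)
Theorem mainTheorem7 :
  forall r : nat -> R,
    r 0%nat = 0 ->
    (forall i, r i < r (S i)) ->
    cv_infty r ->
    (exists l, Un_cv (fun N => sum_f_R0 (fun i => / r (S i)) N) l) ->
  forall a : R, 0 < a < 1 ->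
  exists c : R, 0 < c /\
    forall (s n : nat) (A : nat -> nat -> R) (dP : nat -> R),
      (1 <= n)%nat ->
      (forall i, (i < s)%nat ->
         derivable_pt_lim (fun t => Efun r n (fun k => A k i) t) a (dP i)) ->
      (exists i, (i < s)%nat /\ dP i <> 0) ->
      forall (m : nat) (B : nat -> R -> R) (eta : nat -> nat -> R),
        (n <= m)%nat ->
        CB_basis r m a 1 B ->
        (forall i t, (i < s)%nat -> 0 < t ->
           Efun r n (fun k => A k i) t = sum_f_R0 (fun k => B k t * eta k i) m) ->
        norm_inf s (fun i => eta 0%nat i - eta 1%nat i) >= norm_inf s dP / c /\
        norm_inf s dP / c > 0.
Proof.
  intros r r_0 r_incr _ r_summable a Ha.
  destruct (phi0_uniform_lower r r_0 r_incr r_summable a Ha) as [d [Hd Hphi]].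
  pose proof (r_pos r r_0 r_incr 1 (le_n 1)) as Hr1.
  assert (Hc : 0 < r 1%nat / (a * d)) by (apply Rdiv_lt_0_compat; nra).
  exists (r 1%nat / (a * d)). split; [exact Hc|].
  intros s n A dP Hn HdP Hnz m B eta Hnm Hbasis HP.
  assert (Hm : (1 <= m)%nat) by lia.
  destruct (CB_derivatives_at_a r m a B Hm Ha Hbasis) as [dB [HdB Hvan]].
  pose proof (CB_deriv_first r r_0 r_incr m a B Hm Ha Hbasis _ (HdB 0%nat (Nat.le_0_l m)))
    as HdB0.
  split.
  - apply (norm_inf_ratio s dP _ (dB 0%nat)); [exact Hc | |].
    + rewrite HdB0. apply first_deriv_factor_bound; auto.
    + intros i Hi. apply (CB_deriv_combination r m a B Hm Ha Hbasis dB (fun k => eta k i)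
                            (fun t => Efun r n (fun k => A k i) t)); auto.
  - apply Rlt_gt, Rdiv_lt_0_compat; [apply norm_inf_pos, Hnz | exact Hc].
Qed.
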